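(* Let $(V,e)$ be a unital $\ast$-normed space. For $\varepsilon>0$ put $S_{\varepsilon}=V_{he}^{\ast}\cap\varepsilon\operatorname{ball}V^{\ast}$. Then for every $\varepsilon>1/\|e\|$ the unit ball of $V$ is equivalent to the absolute polar $S_{\varepsilon}^{\circ}$, i.e. there are reals $r,R>0$ with $rS_{\varepsilon}^{\circ}\subseteq\operatorname{ball}V\subseteq RS_{\varepsilon}^{\circ}$.
   Context: A $\ast$-normed space is a complex vector space $V$ with an involution $v\mapsto v^{\ast}$ and a norm with $\|v^{\ast}\|=\|v\|$ for all $v$. $V_h=\{v:v^{\ast}=v\}$. The dual $V^{\ast}$ carries the involution $\langle v,\varphi^{\ast}\rangle=\overline{\langle v^{\ast},\varphi\rangle}$; $V_h^{\ast}$ is the real space of bounded hermitian functionals ($\varphi^{\ast}=\varphi$). For a nonzero $e\in V_h$ put $V_{he}^{\ast}=\{y\in V_h^{\ast}:\langle e,y\rangle=1\}$ and $S=V_{he}^{\ast}\cap\operatorname{ball}V^{\ast}$. The element $e$ is a unit if $S\neq\varnothing$; then $(V,e)$ is called a unital $\ast$-normed space. For $A\subseteq V^{\ast}$, the absolute polar is $A^{\circ}=\{v\in V:|\langle v,a\rangle|\le 1\ \forall a\in A\}$. *)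

From HB Require Import structures.
From mathcomp Require Import all_boot all_order all_algebra.
From mathcomp Require Import all_classical all_reals all_analysis.
From mathcomp Require Import complex.
Set Implicit Arguments. Unset Strict Implicit. Unset Printing Implicit Defensive.
Import Order.TTheory GRing.Theory Num.Theory.
Import numFieldNormedType.Exports.
Local Open Scope classical_set_scope.
Local Open Scope ring_scope.
Local Open Scope complex_scope.

Section StarNormed.
Variables (R : realType) (V : normedModType R[i]).

Definition is_star_normed (star : V -> V) : Prop :=
  [/\ (forall v, star (star v) = v),
      (forall u v, star (u + v) = star u + star v),
      (forall (a : R[i]) v, star (a *: v) = (a ^*) *: star v) &
      (forall v, `|star v| = `|v|)].

Definition hermitian_elt (star : V -> V) (v : V) : Prop := star v = v.

Definition dual_elt (phi : V -> R[i]) : Prop :=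
  (forall (a : R[i]) u v, phi (a *: u + v) = a * phi u + phi v) /\
  exists M : R[i], forall v, `|phi v| <= M * `|v|.

Definition dual_star (star : V -> V) (phi : V -> R[i]) : V -> R[i] :=
  fun v => (phi (star v))^*.

Definition dual_herm (star : V -> V) : set (V -> R[i]) :=
  [set phi | dual_elt phi /\ dual_star star phi = phi].

Definition dual_herm_e (star : V -> V) (e : V) : set (V -> R[i]) :=
  [set phi | dual_herm star phi /\ phi e = 1].

Definition dual_ball (eps : R) : set (V -> R[i]) :=
  [set phi | dual_elt phi /\ forall v, `|phi v| <= eps%:C * `|v|].

Definition S_eps (star : V -> V) (e : V) (eps : R) : set (V -> R[i]) :=
  dual_herm_e star e `&` dual_ball eps.

Definition unital (star : V -> V) (e : V) : Prop :=
  [/\ is_star_normed star, hermitian_elt star e, e != 0 &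
      S_eps star e 1 !=set0].

Definition abs_polar (A : set (V -> R[i])) : set V :=
  [set v | forall a, A a -> `|a v| <= 1].

Definition ballV : set V := [set v | `|v| <= 1].

Definition rscale (r : R) (A : set V) : set V := [set r%:C *: v | v in A].

End StarNormed.

From HB Require Import structures.
From mathcomp Require Import all_boot all_order all_algebra.
From mathcomp Require Import all_classical all_reals all_analysis.
From mathcomp Require Import complex.
From mathcomp Require Import ring lra.
Set Implicit Arguments. Unset Strict Implicit. Unset Printing Implicit Defensive.
Import Order.TTheory GRing.Theory Num.Theory.
Import numFieldNormedType.Exports.
Local Open Scope classical_set_scope.
Local Open Scope ring_scope.
Local Open Scope complex_scope.

(* For hermitian h, the Hahn-Banach theorem on the realification of V,
   symmetrized under the involution and then complexified, yields a hermitian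
   functional psi of norm at most 1 with psi h = |h|; likewise phi for e.
   Since eps > 1/|e| there is a t > 0 such that phi/|e| and
   ((1 - t psi e)/|e|) phi + t psi both lie in S_eps, and comparing their values
   at h gives t |h| <= 2 + t |e| whenever h is in the polar of S_eps.  Every w
   is h + i k with h, k hermitian and still in that absolutely convex polar, so
   the polar is bounded; conversely ball V lies in eps times the polar because
   the functionals of S_eps have norm at most eps. *)

Section HahnBanach.
Variables (R : realType) (E : lmodType R) (p : E -> R).
Hypothesis p_subadd : forall x y, p (x + y) <= p x + p y.
Hypothesis p_homo : forall (t : R) x, 0 < t -> p (t *: x) = t * p x.

(* Linear functionals on subspaces, dominated by p, encoded by their graphs so
   that Zorn's lemma can be applied to sets of pairs. *)
Definition dominated_linear_graph (G : set (E * R)) : Prop :=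
  [/\ G (0, 0),
      forall x a b, G (x, a) -> G (x, b) -> a = b,
      forall t x y a b, G (x, a) -> G (y, b) -> G (t *: x + y, t * a + b) &
      forall x a, G (x, a) -> a <= p x].

Lemma dominated_linear_graphZ G t x a :
  dominated_linear_graph G -> G (x, a) -> G (t *: x, t * a).
Proof. by case=> G0 _ GL _ Gxa; have := GL t _ _ _ _ Gxa G0; rewrite !addr0. Qed.

Lemma dominated_linear_graphD G x y a b :
  dominated_linear_graph G -> G (x, a) -> G (y, b) -> G (x + y, a + b).
Proof. by case=> _ _ GL _ Gxa Gyb; have := GL 1 _ _ _ _ Gxa Gyb; rewrite scale1r mul1r. Qed.

(* Any c between these bounds is an admissible value at a new direction z. *)
Lemma dominated_linear_graph_gap G z : dominated_linear_graph G ->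
  exists c, (forall x a, G (x, a) -> a - p (x - z) <= c) /\
            (forall y b, G (y, b) -> c <= p (y + z) - b).
Proof.
move=> gG; have [G0 _ _ Gp] := gG.
pose S := [set q.2 - p (q.1 - z) | q in G].
have ubS y b : G (y, b) -> ubound S (p (y + z) - b).
  move=> Gyb _ [[x a] Gxa <-] /=.
  have := Gp _ _ (dominated_linear_graphD gG Gxa Gyb).
  have := p_subadd (x - z) (y + z); rewrite addrACA addNr addr0; lra.
exists (sup S); split.
- by move=> x a Gxa; apply: ub_le_sup; [exists (p (0 + z) - 0); exact: ubS | exists (x, a)].
- by move=> y b Gyb; apply: ge_sup; [exists (0 - p (0 - z)), (0, 0) | exact: ubS].
Qed.

Lemma gap_extension_dominated G z c x a t : dominated_linear_graph G ->
  (forall x a, G (x, a) -> a - p (x - z) <= c) ->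
  (forall y b, G (y, b) -> c <= p (y + z) - b) ->
  G (x, a) -> a + t * c <= p (x + t *: z).
Proof.
move=> gG c_lb c_ub Gxa.
have [t0|t0|->] := ltgtP t 0; last by rewrite mul0r scale0r !addr0; case: gG => _ _ _; apply.
- have s0 : 0 < - t by rewrite oppr_gt0.
  have := c_lb _ _ (dominated_linear_graphZ (- t)^-1 gG Gxa).
  have -> : x + t *: z = - t *: ((- t)^-1 *: x - z).
    by rewrite scalerBr scalerA mulfV ?gt_eqF // scale1r scaleNr opprK.
  rewrite p_homo // -(ler_pM2l s0) mulrBr mulrA mulfV ?gt_eqF // mul1r; lra.
- have := c_ub _ _ (dominated_linear_graphZ t^-1 gG Gxa).
  have -> : x + t *: z = t *: (t^-1 *: x + z).
    by rewrite scalerDr scalerA mulfV ?gt_eqF // scale1r.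
  rewrite p_homo // -(ler_pM2l t0) mulrBr mulrA mulfV ?gt_eqF // mul1r; lra.
Qed.

Lemma dominated_linear_graph_extend G z : dominated_linear_graph G ->
  ~ (exists a, G (z, a)) -> exists2 B, dominated_linear_graph B & G `<` B.
Proof.
move=> gG Gz; have [G0 Gfun GL Gp] := gG.
have [c [c_lb c_ub]] := dominated_linear_graph_gap z gG.
pose B := [set q | exists x a t, G (x, a) /\ q = (x + t *: z, a + t * c)].
have GB : G `<=` B by case=> x a Gxa; exists x, a, 0; rewrite scale0r mul0r !addr0.
exists B; last first.
  split => // BG; apply: Gz; exists c; apply: BG.
  by exists 0, 0, 1; rewrite scale1r mul1r !add0r.
split.
- exact: GB.
- move=> _ _ _ [x [a [t [Gxa [-> ->]]]]] [x' [a' [t' [Gxa' [exz ->]]]]].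
  have tt' : t = t'.
    apply: contrapT => /eqP; rewrite -subr_eq0 => ntt'; apply: Gz.
    exists ((t - t')^-1 * (-1 * a + a')).
    have -> : z = (t - t')^-1 *: (-1 *: x + x').
      have -> : x' = x + (t - t') *: z by rewrite scalerBl addrA exz addrK.
      by rewrite scaleN1r addKr scalerA mulVf ?scale1r.
    exact: dominated_linear_graphZ gG (GL _ _ _ _ _ Gxa Gxa').
  move: exz; rewrite -tt' => /addIr exx'; rewrite -exx' in Gxa'.
  by rewrite (Gfun _ _ _ Gxa Gxa').
- move=> r _ _ _ _ [x [a [t [Gxa [-> ->]]]]] [y [b [s [Gyb [-> ->]]]]].
  exists (r *: x + y), (r * a + b), (r * t + s); split; first exact: GL.
  by congr (_, _); [rewrite scalerDl scalerDr scalerA addrACA | ring].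
- move=> _ _ [x [a [t [Gxa [-> ->]]]]].
  exact: gap_extension_dominated gG c_lb c_ub Gxa.
Qed.

Lemma dominated_linear_graph_bigcup (F : set (set (E * R))) :
  total_on F subset -> (forall Y, F Y -> Y !=set0 -> dominated_linear_graph Y) ->
  \bigcup_(X in F) X !=set0 -> dominated_linear_graph (\bigcup_(X in F) X).
Proof.
move=> Ftot Fg [q [X FX Xq]].
have common q1 q2 : (\bigcup_(X in F) X) q1 -> (\bigcup_(X in F) X) q2 ->
    exists2 Y, F Y & Y q1 /\ Y q2.
  move=> [Y1 FY1 Yq1] [Y2 FY2 Yq2].
  have [Y12|Y21] := Ftot _ _ FY1 FY2.
  - by exists Y2 => //; split => //; apply: Y12.
  - by exists Y1 => //; split => //; apply: Y21.
split.
- by exists X => //; have [] := Fg X FX (ex_intro _ q Xq).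
- move=> x a b /common /[apply] -[Y FY [Yxa Yxb]].
  by have [_ Yfun _ _] := Fg Y FY (ex_intro _ _ Yxa); exact: Yfun Yxa Yxb.
- move=> t x y a b /common /[apply] -[Y FY [Yxa Yyb]]; exists Y => //.
  by have [_ _ YL _] := Fg Y FY (ex_intro _ _ Yxa); exact: YL.
- by move=> x a [Y FY Yxa]; have [_ _ _] := Fg Y FY (ex_intro _ _ Yxa); apply.
Qed.

Theorem hahn_banach_graph L : dominated_linear_graph L ->
  exists f : E -> R,
    [/\ scalar f, forall x a, L (x, a) -> f x = a & forall x, f x <= p x].
Proof.
(* set0 is allowed so that the union of the empty chain stays in P. *)
move=> gL; pose P G := G = set0 \/ L `<=` G /\ dominated_linear_graph G.
have [A [PA Amax]] : exists A, P A /\ forall B, A `<` B -> ~ P B.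
  apply: Zorn_bigcup => F FP Ftot.
  have [U0|U0] := pselect (\bigcup_(X in F) X !=set0); last first.
    by left; apply/eqP/negPn/negP => /set0P.
  have Fg Y : F Y -> Y !=set0 -> L `<=` Y /\ dominated_linear_graph Y.
    by move=> FY [q Yq]; case: (FP _ FY) => // Y0; rewrite Y0 in Yq.
  right; split; last first.
    by apply: dominated_linear_graph_bigcup U0 => // Y FY /(Fg Y FY) [].
  have [q [X FX Xq]] := U0; have [LX _] := Fg X FX (ex_intro _ _ Xq).
  exact: subset_trans LX (bigcup_sup FX).
have [LA gA] : L `<=` A /\ dominated_linear_graph A.
  case: PA => // A0; exfalso; apply: (Amax L); last by right; split.
  rewrite A0; split => // /(_ (0, 0)); have [L0 _ _ _] := gL; exact.
have Atot z : exists a, A (z, a).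
  apply: contrapT => Az; have [B gB AB] := dominated_linear_graph_extend gA Az.
  by apply: (Amax B AB); right; split => //; apply: subset_trans LA (properW AB).
have [f Af] := choice Atot; have [_ Afun AL Ap] := gA.
exists f; split.
- by move=> t x y; exact: Afun (Af _) (AL _ _ _ _ _ (Af x) (Af y)).
- by move=> x a Lxa; exact: Afun (Af x) (LA _ Lxa).
- by move=> x; exact: Ap (Af x).
Qed.

Lemma sublinear0 : p 0 = 0.
Proof. by have := p_homo 0 (ltr0n _ 2); rewrite scaler0; lra. Qed.

Lemma sublinearZ_ge x (t : R) : t * p x <= p (t *: x).
Proof.
have [t0|t0|->] := ltgtP t 0; last by rewrite mul0r scale0r sublinear0.
- have := p_subadd x (- x); rewrite subrr sublinear0.
  rewrite -[t]opprK scaleNr -scalerN p_homo ?oppr_gt0 //; nra.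
- by rewrite p_homo.
Qed.

Theorem hahn_banach x0 :
  exists f : E -> R, [/\ scalar f, f x0 = p x0 & forall x, f x <= p x].
Proof.
pose L := [set (t *: x0, t * p x0) | t in [set: R]].
have gL : dominated_linear_graph L.
  split.
  - by exists 0; rewrite ?scale0r ?mul0r.
  - move=> _ _ _ [t _ [<- <-]] [s _ [/eqP]] + <-.
    rewrite -subr_eq0 -scalerBl scaler_eq0 subr_eq0 => /orP[/eqP-> //|/eqP x00].
    by rewrite x00 sublinear0 !mulr0.
  - move=> r _ _ _ _ [t _ [<- <-]] [s _ [<- <-]]; exists (r * t + s) => //.
    by rewrite scalerDl scalerA mulrDl mulrA.
  - by move=> _ _ [t _ [<- <-]]; exact: sublinearZ_ge.
have [f [fL fL0 fp]] := hahn_banach_graph gL.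
by exists f; split => //; apply: fL0; exists 1; rewrite ?scale1r ?mul1r.
Qed.

End HahnBanach.

Definition realified (R : rcfType) (V : lmodType R[i]) : Type := V.

Section Realified.
Variables (R : rcfType) (V : lmodType R[i]).

HB.instance Definition _ := GRing.Zmodule.on (realified V).

Definition realified_scale (t : R) (v : realified V) : realified V := t%:C *: (v : V).

Fact realified_scaleA a b v :
  realified_scale a (realified_scale b v) = realified_scale (a * b) v.
Proof. by rewrite /realified_scale scalerA rmorphM. Qed.

Fact realified_scale1 : left_id 1 realified_scale.
Proof. by move=> v; rewrite /realified_scale rmorph1 scale1r. Qed.

Fact realified_scaleDr : right_distributive realified_scale +%R.
Proof. by move=> a u v; rewrite /realified_scale scalerDr. Qed.

Fact realified_scaleDl v : {morph realified_scale ^~ v : a b / a + b}.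
Proof. by move=> a b; rewrite /realified_scale rmorphD scalerDl. Qed.

HB.instance Definition _ := GRing.Zmodule_isLmodule.Build R (realified V)
  realified_scaleA realified_scale1 realified_scaleDr realified_scaleDl.

Lemma realified_scaleE (t : R) (v : realified V) : t *: v = t%:C *: (v : V).
Proof. by []. Qed.

End Realified.

Section ComplexNormed.
Variables (R : realType) (V : normedModType R[i]).

Definition rnorm (v : V) : R := complex.Re `|v|.

Lemma normc_rnorm v : `|v| = (rnorm v)%:C.
Proof. by rewrite /rnorm RRe_real ?normr_real. Qed.

Lemma rnorm_ge0 v : 0 <= rnorm v.
Proof. by rewrite -ler0c -normc_rnorm. Qed.

Lemma rnorm_gt0 v : v != 0 -> 0 < rnorm v.
Proof. by move=> v0; rewrite -ltcR -normc_rnorm normr_gt0. Qed.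

Lemma rnormD u v : rnorm (u + v) <= rnorm u + rnorm v.
Proof. by have := ler_normD u v; rewrite !normc_rnorm -rmorphD lecR. Qed.

Lemma rnormZ (a : R[i]) v : rnorm (a *: v) = complex.Re `|a| * rnorm v.
Proof. by rewrite {1}/rnorm normrZ normc_rnorm -(RRe_real (normr_real a)) -rmorphM. Qed.

Lemma normc_real (a : R) : `|a%:C| = `|a|%:C.
Proof. by rewrite normc_def /= expr0n addr0 sqrtr_sqr. Qed.

Lemma real_scalarD g : scalar (g : realified V -> R) -> {morph g : u v / u + v}.
Proof.
by move=> gL u v; have := gL 1 u v; rewrite realified_scaleE rmorph1 scale1r mul1r.
Qed.

Lemma real_scalarZ g : scalar (g : realified V -> R) ->
  forall (t : R) v, g (t%:C *: v) = t * g v.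
Proof. by move=> gL t v; exact: (scalable_linear gL). Qed.

Lemma real_scalarN g : scalar (g : realified V -> R) -> {morph g : v / - v}.
Proof.
by move=> gL v; rewrite -scaleN1r (scalable_linear gL); exact: mulN1r.
Qed.

Lemma rnorm_hahn_banach (x0 : V) : exists g : V -> R,
  [/\ scalar (g : realified V -> R), g x0 = rnorm x0 & forall v, g v <= rnorm v].
Proof.
apply: (@hahn_banach R (realified V) rnorm); first exact: rnormD.
by move=> t v t0; rewrite realified_scaleE rnormZ normc_real /= gtr0_norm.
Qed.

Lemma conjc_i : conjc 'i%C = - 'i%C :> R[i].
Proof. by simpc. Qed.

(* A complex-linear functional phi is determined by its real part g:
   phi v = g v - i g (i v). *)
Definition complexify (g : V -> R) (v : V) : R[i] := Complex (g v) (- g ('i%C *: v)).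

Lemma complexify_scalar g : scalar (g : realified V -> R) -> scalar (complexify g).
Proof.
move=> gL [a b] u v.
have -> : (a +i* b) *: u = a%:C *: u + b%:C *: ('i%C *: u).
  by rewrite scalerA -scalerDl; congr (_ *: _); simpc.
rewrite /complexify.
have -> : 'i%C *: (a%:C *: u + b%:C *: ('i%C *: u) + v) =
    a%:C *: ('i%C *: u) + (- b)%:C *: u + 'i%C *: v.
  have iZ (t : R) x : 'i%C *: (t%:C *: x) = t%:C *: ('i%C *: x).
    by rewrite !scalerA mulrC.
  have iiK x : 'i%C *: ('i%C *: x) = - x.
    by rewrite scalerA (_ : 'i%C * 'i%C = -1) ?scaleN1r //; simpc.
  by rewrite !scalerDr !iZ iiK scalerN rmorphN scaleNr.
rewrite !(real_scalarD gL) !(real_scalarZ gL); simpc; congr Complex; ring.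
Qed.

Lemma complexify_le_norm g : scalar (g : realified V -> R) ->
  (forall v, g v <= rnorm v) -> forall v, `|complexify g v| <= `|v|.
Proof.
move=> gL gp v; set z := complexify g v.
have [->|z0] := eqVneq z 0; first by rewrite normr0.
pose w := z^* / `|z|.
have wz : w * z = `|z| by rewrite /w mulrC mulrA -sqr_normc expr2 mulfK ?normr_eq0.
have nw : complex.Re `|w| = 1.
  by rewrite /w normrM normcJ normfV normr_id mulfV ?normr_eq0.
have gw : g (w *: v) = complex.Re `|z|.
  by rewrite -wz -(scalable_linear (complexify_scalar gL)).
have := gp (w *: v); rewrite gw rnormZ nw mul1r normc_rnorm.
by rewrite -{1}(RRe_real (normr_real z)) lecR.
Qed.

Lemma complexify_dual_ball1 g : scalar (g : realified V -> R) ->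
  (forall v, g v <= rnorm v) -> dual_ball 1 (complexify g).
Proof.
move=> gL gp; have gB v : `|complexify g v| <= 1%:C * `|v|.
  by rewrite mul1r; exact: complexify_le_norm.
by split=> //; split; [exact: complexify_scalar | exists 1%:C].
Qed.

End ComplexNormed.

Section Polar.
Variables (R : realType) (V : normedModType R[i]).

Lemma abs_polar_absconvex (A : set (V -> R[i])) (a b : R[i]) u v :
  (forall phi, A phi -> dual_elt phi) -> `|a| + `|b| <= 1 ->
  abs_polar A u -> abs_polar A v -> abs_polar A (a *: u + b *: v).
Proof.
move=> Adual ab Au Av phi Aphi; have [phiL _] := Adual _ Aphi.
have [phiu phiv] := (Au _ Aphi, Av _ Aphi).
rewrite phiL (scalable_linear phiL); apply: le_trans (ler_normD _ _) _.
rewrite !normrM; apply: le_trans ab.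
by apply: lerD; rewrite -[X in _ <= X]mulr1; apply: ler_wpM2l.
Qed.

Lemma rscale_abs_polar_sub_ballV (A : set (V -> R[i])) (K : R) : 0 < K ->
  (forall w, abs_polar A w -> rnorm w <= K) -> rscale K^-1 (abs_polar A) `<=` @ballV R V.
Proof.
move=> K0 AK _ [w Aw <-]; rewrite /ballV /= normrZ normc_real normc_rnorm -rmorphM.
by rewrite -(rmorph1 (real_complex R)) lecR gtr0_norm ?invr_gt0 // ler_pdivrMl // mulr1 AK.
Qed.

Lemma ballV_sub_rscale_abs_polar (A : set (V -> R[i])) (eps : R) : 0 < eps ->
  A `<=` dual_ball eps -> @ballV R V `<=` rscale eps (abs_polar A).
Proof.
move=> eps0 Aeps v v1; exists (eps^-1%:C *: v); last first.
  by rewrite scalerA -rmorphM mulfV ?gt_eqF // rmorph1 scale1r.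
move=> phi /Aeps [[phiL _] phiB].
have epsV0 : 0 <= eps^-1%:C by rewrite ler0c invr_ge0 ltW.
rewrite (scalable_linear phiL) normrM (ger0_norm epsV0).
apply: le_trans (ler_wpM2l epsV0 (phiB v)) _.
by rewrite mulrA -rmorphM mulVf ?gt_eqF // rmorph1 mul1r.
Qed.

End Polar.

Section Star.
Variables (R : realType) (V : normedModType R[i]) (star : V -> V).
Hypothesis star_normed : is_star_normed star.

Lemma starK : involutive star. Proof. by case: star_normed. Qed.

Lemma starD : {morph star : u v / u + v}. Proof. by case: star_normed. Qed.

Lemma starZ (a : R[i]) v : star (a *: v) = conjc a *: star v.
Proof. by case: star_normed. Qed.

Lemma rnorm_star v : rnorm (star v) = rnorm v.
Proof. by case: star_normed => _ _ _ nstar; rewrite /rnorm nstar. Qed.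

Lemma hermitian_rnorm_hahn_banach h : star h = h -> exists g : V -> R,
  [/\ scalar (g : realified V -> R), g h = rnorm h, forall v, g v <= rnorm v &
      forall v, g (star v) = g v].
Proof.
move=> hh; have [f [fL fh fp]] := rnorm_hahn_banach h.
exists (fun v => (f v + f (star v)) / 2); split.
- move=> t u v; rewrite realified_scaleE starD starZ conjc_real.
  by rewrite !(real_scalarD fL) !(real_scalarZ fL); ring.
- by rewrite hh fh; field.
- by move=> v; have := fp v; have := fp (star v); rewrite rnorm_star; lra.
- by move=> v; rewrite starK addrC.
Qed.

Lemma complexify_herm g : scalar (g : realified V -> R) ->
  (forall v, g (star v) = g v) -> dual_star star (complexify g) = complexify g.
Proof.
move=> gL gstar; apply: funext => v; rewrite /dual_star /complexify.
have -> : 'i%C *: star v = - star ('i%C *: v).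
  by rewrite starZ conjc_i scaleNr opprK.
by rewrite (real_scalarN gL) !gstar; simpc.
Qed.

Lemma hermitian_norming h : star h = h ->
  exists phi, [/\ dual_herm star phi, dual_ball 1 phi & phi h = `|h|].
Proof.
move=> hh; have [g [gL gh gp gstar]] := hermitian_rnorm_hahn_banach hh.
have B1 := complexify_dual_ball1 gL gp.
exists (complexify g); split => //; first by split; [case: B1 | exact: complexify_herm].
rewrite /complexify gh normc_rnorm (_ : g ('i%C *: h) = 0) ?oppr0 //.
by have := gstar ('i%C *: h); rewrite starZ hh conjc_i scaleNr (real_scalarN gL); lra.
Qed.

Lemma dual_herm_star phi v : dual_herm star phi -> phi (star v) = conjc (phi v).
Proof. by case=> _ phiH; rewrite -[in RHS]phiH /dual_star conjcK. Qed.

Lemma dual_herm_real phi h : dual_herm star phi -> star h = h ->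
  phi h = (complex.Re (phi h))%:C.
Proof.
move=> phiH hh; have := dual_herm_star h phiH; rewrite hh.
by case: (phi h) => a b /= [] /eqP; rewrite -subr_eq0 opprK -mulr2n mulrn_eq0 /= => /eqP ->.
Qed.

Definition re_part w := (2^-1 : R)%:C *: (w + star w).

Definition im_part w := re_part (- 'i%C *: w).

Lemma re_part_herm w : star (re_part w) = re_part w.
Proof. by rewrite /re_part starZ conjc_real starD starK addrC. Qed.

Lemma re_im_partE w : re_part w + 'i%C *: im_part w = w.
Proof.
have -> : 'i%C *: im_part w = (2^-1 : R)%:C *: (w - star w).
  rewrite /im_part /re_part starZ (_ : conjc (- 'i%C) = 'i%C); last by simpc.
  rewrite scalerBr -scaleNr !scalerDr !scalerA.
  by congr (_ *: _ + _ *: _); simpc.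
rewrite /re_part -scalerDr addrACA subrr addr0 scalerDr -scalerDl -rmorphD.
by rewrite (_ : 2^-1 + 2^-1 = 1 :> R) ?rmorph1 ?scale1r //; field.
Qed.

Lemma abs_polar_herm_parts A w : A `<=` dual_herm star -> abs_polar A w ->
  abs_polar A (re_part w) /\ abs_polar A (im_part w).
Proof.
move=> Aherm Aw; have Adual phi : A phi -> dual_elt phi by move/Aherm => [].
have Are u : abs_polar A u -> abs_polar A (re_part u).
  move=> Au; rewrite /re_part scalerDr; apply: abs_polar_absconvex => //.
    rewrite normc_real -rmorphD ger0_norm ?invr_ge0 //.
    by rewrite (_ : 2^-1 + 2^-1 = 1 :> R) ?rmorph1 //; field.
  by move=> phi Aphi; rewrite dual_herm_star ?normcJ ?Au //; exact: Aherm.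
split; apply: Are => //; rewrite -[_ *: w]addr0 -(scale0r w).
apply: abs_polar_absconvex => //.
by rewrite normrN normr0 addr0 complexiE normCi.
Qed.

End Star.

Section UnitalPolar.
Variables (R : realType) (V : normedModType R[i]) (star : V -> V) (e : V) (eps : R).
Hypotheses (star_normed : is_star_normed star) (e_herm : star e = e).

Lemma S_eps_comb phi psi (c d : R) :
  dual_herm star phi -> dual_herm star psi -> dual_ball 1 phi -> dual_ball 1 psi ->
  c%:C * phi e + d%:C * psi e = 1 -> `|c| + `|d| <= eps ->
  S_eps star e eps (fun v => c%:C * phi v + d%:C * psi v).
Proof.
move=> phiH psiH [[phiL _] phiB] [[psiL _] psiB] ce cd.
have B v : `|c%:C * phi v + d%:C * psi v| <= (`|c| + `|d|)%:C * `|v|.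
  rewrite rmorphD mulrDl; apply: le_trans (ler_normD _ _) _.
  by apply: lerD; rewrite normrM normc_real ler_wpM2l ?ler0c // -[`|v|]mul1r.
have L : dual_elt (fun v => c%:C * phi v + d%:C * psi v).
  by split; [move=> a u v; rewrite phiL psiL; ring | exists (`|c| + `|d|)%:C].
split; [split; [split => // | by []] | split => // v].
- apply: funext => v; rewrite /dual_star (dual_herm_star _ phiH) (dual_herm_star _ psiH).
  by case: (phi v) (psi v) => [a b] [a' b']; simpc.
- by apply: le_trans (B v) _; rewrite ler_wpM2r // lecR.
Qed.

Lemma abs_polar_herm_rnorm_le (t : R) h : 0 < rnorm e -> 0 < t ->
  (rnorm e)^-1 + 2 * t <= eps -> star h = h -> abs_polar (S_eps star e eps) h ->
  t * rnorm h <= 2 + t * rnorm e.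
Proof.
move=> n0 t0 teps hh Ph; set n := rnorm e in n0 teps *.
have [phi [phiH phiB phie]] := hermitian_norming star_normed e_herm.
have [psi [psiH psiB psih]] := hermitian_norming star_normed hh.
set s := complex.Re (psi e); have psie : psi e = s%:C := dual_herm_real psiH e_herm.
have phien : phi e = n%:C by rewrite phie normc_rnorm.
have s_le : `|s| <= n.
  by have [_ /(_ e)] := psiB; rewrite psie normc_real mul1r normc_rnorm lecR.
have ts_le : `|1 - t * s| <= 1 + t * n.
  apply: le_trans (ler_normB _ _) _; rewrite normr1 normrM gtr0_norm //.
  by rewrite lerD2l ler_pM2l.
pose c := (1 - t * s) / n.
have S1 : S_eps star e eps (fun v => n^-1%:C * phi v + 0%:C * psi v).
  apply: S_eps_comb => //.
    by rewrite phien -rmorphM mulVf ?gt_eqF // rmorph0 mul0r addr0 rmorph1.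
  by rewrite normr0 addr0 gtr0_norm ?invr_gt0 //; lra.
have S2 : S_eps star e eps (fun v => c%:C * phi v + t%:C * psi v).
  apply: S_eps_comb => //.
    by rewrite phien psie -!rmorphM -rmorphD /c divfK ?gt_eqF // subrK rmorph1.
  have c_le : `|c| <= n^-1 + t.
    rewrite /c normrM [`|n^-1|]gtr0_norm ?invr_gt0 //.
    rewrite (_ : n^-1 + t = (1 + t * n) * n^-1); last by field; rewrite gt_eqF.
    by rewrite ler_pM2r ?invr_gt0.
  by rewrite (gtr0_norm t0); lra.
have P1 := Ph _ S1; have P2 := Ph _ S2; rewrite /= psih normc_rnorm in P1 P2.
have htn : (t * rnorm h)%:C = (c%:C * phi h + t%:C * (rnorm h)%:C)
    - (1 - t * s)%:C * (n^-1%:C * phi h + 0%:C * (rnorm h)%:C).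
  by rewrite /c rmorph0 mul0r addr0 !rmorphM; ring.
have : (t * rnorm h)%:C <= 1 + `|1 - t * s|%:C.
  have tnh0 : 0 <= (t * rnorm h)%:C by rewrite ler0c mulr_ge0 ?rnorm_ge0 ?ltW.
  rewrite -(ger0_norm tnh0) htn; apply: le_trans (ler_normB _ _) _; apply: lerD => //.
  by rewrite normrM normc_real -[X in _ <= X]mulr1 ler_wpM2l ?ler0c.
by rewrite -(rmorph1 (real_complex R)) -rmorphD lecR; lra.
Qed.

Lemma abs_polar_rnorm_bounded : 0 < rnorm e -> (rnorm e)^-1 < eps ->
  exists2 K, 0 < K & forall w, abs_polar (S_eps star e eps) w -> rnorm w <= K.
Proof.
move=> n0 neps; set n := rnorm e in n0 neps *; pose t := (eps - n^-1) / 2.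
have t0 : 0 < t by rewrite /t; lra.
have herm_le h : star h = h -> abs_polar (S_eps star e eps) h -> rnorm h <= (2 + t * n) / t.
  move=> hh Ph; rewrite ler_pdivlMr // mulrC.
  by apply: abs_polar_herm_rnorm_le => //; rewrite /t; lra.
exists (2 * ((2 + t * n) / t)); first by rewrite mulr_gt0 // divr_gt0 //; nra.
have Sherm : S_eps star e eps `<=` dual_herm star by move=> phi [[]].
move=> w Pw; have [Pre Pim] := abs_polar_herm_parts Sherm Pw.
rewrite -(re_im_partE star_normed w); apply: le_trans (rnormD _ _) _.
rewrite rnormZ complexiE normCi /= mul1r.
have := herm_le _ (re_part_herm star_normed w) Pre.
have := herm_le _ (re_part_herm star_normed _) Pim; lra.
Qed.

End UnitalPolar.

Theorem theorem4p3 (R : realType) (V : normedModType R[i])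
    (star : V -> V) (e : V) (eps : R) :
  unital star e ->
  1 / `|e| < eps%:C ->
  exists r Rr : R, [/\ 0 < r, 0 < Rr,
    rscale r (abs_polar (S_eps star e eps)) `<=` @ballV R V &
    @ballV R V `<=` rscale Rr (abs_polar (S_eps star e eps))].
Proof.
move=> [star_normed e_herm e_neq0 _] e_eps.
have n0 : 0 < rnorm e by exact: rnorm_gt0.
have neps : (rnorm e)^-1 < eps.
  by move: e_eps; rewrite normc_rnorm div1r -(fmorphV (real_complex R)) ltcR.
have eps0 : 0 < eps by apply: lt_trans neps; rewrite invr_gt0.
have [K K0 polarK] := abs_polar_rnorm_bounded star_normed e_herm n0 neps.
exists K^-1, eps; split.
- by rewrite invr_gt0.
- exact: eps0.
- exact: rscale_abs_polar_sub_ballV.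
- by apply: ballV_sub_rscale_abs_polar => // phi [].
Qed.
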